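(* Let $0<\delta_0\le 1/253$ and $\lambda,\mu,R>0$. Assume Condition (C3), $\mu^2\le \delta_0R^2/(2J^2(g^0))$ (vacuous if $J(g^0)=0$), and $$\frac{4\lambda^2 s_0}{\Lambda_{\tilde X,\min}^2}\le \delta_0R^2.$$ Suppose the realized data $(X,Z,E)$ lie in $\mathcal T(\delta_0,R)$, i.e. $$\sup_{f\in\mathcal F(R)}\big|\|f\|_n^2-\|f\|^2\big|\le\delta_0R^2\quad\text{and}\quad \sup_{f\in\mathcal F(R)}\big|E^Tf(X,Z)\big|/n\le \delta_0R^2.$$ Then every minimizer $(\hat\beta,\hat g)$ of the doubly penalised least squares criterion satisfies $\tau(\hat f-f^0)\le R$.
   Context: Setting. Let $(x,z)$ be a random vector with $x\in\mathbb R^p$ (a row vector) and $z\in\mathbb R^d$, joint distribution $Q$ and marginal $Q_z$ of $z$; let $(x_i,z_i)$, $i=1,\dots,n$, be i.i.d. copies of $(x,z)$, and let $X$ be the $n\times p$ matrix with rows $x_i$. Let $\mathcal G$ be a linear subspace of $L_2(Q_z)$ equipped with a semi-inner product $J(\cdot,\cdot)$ with associated seminorm $J(\cdot)$. Fix $\beta^0\in\mathbb R^p$, $g^0\in\mathcal G$; $S_0=\{j:\beta^0_j\neq 0\}$, $s_0=|S_0|$. The responses are $Y=X\beta^0+g^0(Z)+E\in\mathbb R^n$, where $g(Z)=(g(z_1),\dots,g(z_n))^T$ and $E=(e_1,\dots,e_n)^T$. For a function $f$ of $(x,z)$: $\|f\|^2=\mathbb E f(x,z)^2$, $\|f\|_n^2=\frac1n\sum_{i=1}^n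 f(x_i,z_i)^2$. For $\beta\in\mathbb R^p$, $g\in\mathcal G$, write $f=X\beta+g$ for the function $(x,z)\mapsto x\beta+g(z)$ (and also for the vector $f(X,Z)=X\beta+g(Z)$); $f^0=X\beta^0+g^0$. Let $h(z)=\mathbb E[x\mid z]$, $\tilde x=x-h(z)$; $\Lambda_{\tilde X,\min}^2$ is the smallest eigenvalue of $\mathbb E[\tilde x^T\tilde x]$ and $\Lambda_{h,\max}^2$ the largest eigenvalue of $\mathbb E[h(z)^Th(z)]$. Condition (C3): $\Lambda_{\tilde X,\min}>0$ and $\Lambda_{h,\max}<\infty$. Estimator: $(\hat\beta,\hat g)$ minimizes over $\mathbb R^p\times\mathcal G$ the criterion $\|Y-X\beta-g(Z)\|_n^2+\lambda\|\beta\|_1+\mu^2J^2(g)$, where $\|v\|_n^2=v^Tv/n$; $\hat f=X\hat\beta+\hat g$. For a pair $(\beta,g)$ with $f=X\beta+g$: $\tau(f)=\frac{\lambda\|\beta\|_1}{R\sqrt{\delta_0/2}}+\sqrt{\|X\beta+g\|^2+\mu^2J^2(g)}$ (with $\hat f-f^0$ corresponding to $(\hat\beta-\beta^0,\hat g-g^0)$), and $\mathcal F(R)$ is the set of all $f=X\beta+g$, $\beta\in\mathbb R^p$, $g\in\mathcal G$, with $\tau(f)\le R$. *)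

From HB Require Import structures.
From mathcomp Require Import all_boot all_order all_algebra.
From mathcomp Require Import all_classical all_reals all_analysis.
Set Implicit Arguments. Unset Strict Implicit. Unset Printing Implicit Defensive.
Import Order.TTheory GRing.Theory Num.Theory.
Import numFieldNormedType.Exports.
Local Open Scope classical_set_scope.
Local Open Scope ring_scope.

Section PLM.
Context {dm : measure_display} {Omega : measurableType dm} {R : realType}.
Variable P : probability Omega R.

Definition sq_int (f : Omega -> R) : Prop :=
  measurable_fun setT f /\ P.-integrable setT (fun w => ((f w) ^+ 2)%:E).

Definition Exp (f : Omega -> R) : R := (\int[P]_(w in setT) f w)%R.

Context {p d : nat}.
Variables (x : Omega -> 'rV[R]_p) (z : Omega -> 'rV[R]_d).

Definition L2z (g : 'rV[R]_d -> R) : Prop := sq_int (fun w => g (z w)).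

(* h is (a version of) the conditional expectation E[x | z]:
   each coordinate h_j(z) is integrable and sigma(z)-measurable, and
   E[(x_j - h_j(z)) phi(z)] = 0 for all bounded sigma(z)-measurable phi(z). *)
Definition cond_exp (h : 'rV[R]_d -> 'rV[R]_p) : Prop :=
  forall j : 'I_p,
    measurable_fun setT (fun w => h (z w) 0 j) /\
    P.-integrable setT (fun w => (h (z w) 0 j)%:E) /\
    forall phi : 'rV[R]_d -> R,
      measurable_fun setT (fun w => phi (z w)) ->
      (exists M : R, forall v, `|phi v| <= M) ->
      Exp (fun w => (x w 0 j - h (z w) 0 j) * phi (z w)) = 0.

Definition SigmaXt (h : 'rV[R]_d -> 'rV[R]_p) : 'M[R]_p :=
  \matrix_(j, k) Exp (fun w => (x w 0 j - h (z w) 0 j) * (x w 0 k - h (z w) 0 k)).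

Definition SigmaH (h : 'rV[R]_d -> 'rV[R]_p) : 'M[R]_p :=
  \matrix_(j, k) Exp (fun w => h (z w) 0 j * h (z w) 0 k).

Definition min_eig (A : 'M[R]_p) (L : R) : Prop :=
  eigenvalue A L /\ forall a, eigenvalue A a -> L <= a.

Definition max_eig (A : 'M[R]_p) (L : R) : Prop :=
  eigenvalue A L /\ forall a, eigenvalue A a -> a <= L.

(* Condition (C3), with LX2 = Lambda_{Xtilde,min}^2 :
   Lambda_{Xtilde,min} > 0 and Lambda_{h,max} < oo (the largest eigenvalue of
   E[h^T h] exists as a real number, h(z) being square integrable). *)
Definition condC3 (h : 'rV[R]_d -> 'rV[R]_p) (LX2 : R) : Prop :=
  min_eig (SigmaXt h) LX2 /\ 0 < LX2 /\
  (forall j : 'I_p, sq_int (fun w => h (z w) 0 j)) /\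
  exists LH2 : R, max_eig (SigmaH h) LH2.

Definition semi_inner_subspace (G : set ('rV[R]_d -> R))
  (J : ('rV[R]_d -> R) -> ('rV[R]_d -> R) -> R) : Prop :=
  (forall g, G g -> L2z g) /\
  G (fun _ => 0) /\
  (forall g1 g2, G g1 -> G g2 -> G (fun v => g1 v + g2 v)) /\
  (forall (a : R) g, G g -> G (fun v => a * g v)) /\
  (forall g1 g2, G g1 -> G g2 -> J g1 g2 = J g2 g1) /\
  (forall (a : R) g1 g2 g3, G g1 -> G g2 -> G g3 ->
      J (fun v => a * g1 v + g2 v) g3 = a * J g1 g3 + J g2 g3) /\
  (forall g, G g -> 0 <= J g g).

Definition l1 (b : 'cV[R]_p) : R := \sum_(j < p) `|b j 0|.

Definition normQ2 (b : 'cV[R]_p) (g : 'rV[R]_d -> R) : R :=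
  Exp (fun w => ((\sum_(j < p) x w 0 j * b j 0) + g (z w)) ^+ 2).

Definition tau (J : ('rV[R]_d -> R) -> ('rV[R]_d -> R) -> R)
  (delta0 lambda mu Rr : R) (b : 'cV[R]_p) (g : 'rV[R]_d -> R) : R :=
  lambda * l1 b / (Rr * Num.sqrt (delta0 / 2)) +
  Num.sqrt (normQ2 b g + mu ^+ 2 * J g g).

Context {n : nat}.
Variables (X : 'M[R]_(n, p)) (Zs : 'I_n -> 'rV[R]_d) (E : 'cV[R]_n).

Definition fval (b : 'cV[R]_p) (g : 'rV[R]_d -> R) (i : 'I_n) : R :=
  (\sum_(j < p) X i j * b j 0) + g (Zs i).

Definition normn2 (b : 'cV[R]_p) (g : 'rV[R]_d -> R) : R :=
  (\sum_(i < n) fval b g i ^+ 2) / n%:R.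

Definition in_T (G : set ('rV[R]_d -> R))
  (J : ('rV[R]_d -> R) -> ('rV[R]_d -> R) -> R)
  (delta0 lambda mu Rr : R) : Prop :=
  forall (b : 'cV[R]_p) (g : 'rV[R]_d -> R), G g ->
    tau J delta0 lambda mu Rr b g <= Rr ->
    `|normn2 b g - normQ2 b g| <= delta0 * Rr ^+ 2 /\
    `|\sum_(i < n) E i 0 * fval b g i| / n%:R <= delta0 * Rr ^+ 2.

(* the penalised criterion, with Y = X beta0 + g0(Z) + E *)
Definition crit (J : ('rV[R]_d -> R) -> ('rV[R]_d -> R) -> R)
  (beta0 : 'cV[R]_p) (g0 : 'rV[R]_d -> R) (lambda mu : R)
  (b : 'cV[R]_p) (g : 'rV[R]_d -> R) : R :=
  (\sum_(i < n) (fval beta0 g0 i + E i 0 - fval b g i) ^+ 2) / n%:R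
  + lambda * l1 b + mu ^+ 2 * J g g.

Definition is_minimizer (G : set ('rV[R]_d -> R))
  (J : ('rV[R]_d -> R) -> ('rV[R]_d -> R) -> R)
  (beta0 : 'cV[R]_p) (g0 : 'rV[R]_d -> R) (lambda mu : R)
  (bh : 'cV[R]_p) (gh : 'rV[R]_d -> R) : Prop :=
  G gh /\ forall b g, G g ->
    crit J beta0 g0 lambda mu bh gh <= crit J beta0 g0 lambda mu b g.

End PLM.

Definition s0 {R : realType} {p : nat} (beta0 : 'cV[R]_p) : nat :=
  #|[pred j : 'I_p | beta0 j 0 != 0]|.

From HB Require Import structures.
From mathcomp Require Import all_boot all_order all_algebra.
From mathcomp Require Import all_classical all_reals all_analysis.
From mathcomp Require Import measurable_realfun.
From mathcomp Require Import ring lra.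
Import Order.TTheory GRing.Theory Num.Theory.
Import numFieldNormedType.Exports.
Local Open Scope classical_set_scope.
Local Open Scope ring_scope.
Set Implicit Arguments. Unset Strict Implicit.

(* The estimation error tau is positively homogeneous and the penalised
   criterion is convex, so for t = R / (R + tau(fhat - f0)) the shrunken error
   t (fhat - f0) lies in F(R) and still does not increase the criterion
   compared with f0.  On T(delta0, R) this basic inequality controls the
   empirical norm and the noise term; the part of the l1 penalty on S0 is handled by the
   compatibility bound Lambda^2 |beta|_2^2 <= ||x beta + g||^2, which holds
   because x - h(z) is orthogonal to every square integrable function of z.
   The outcome is tau(t (fhat - f0)) <= R/2, which forces tau(fhat - f0) <= R. *)

Section SquareIntegrable.
Context {dm : measure_display} {Omega : measurableType dm} {R : realType}.
Variable P : probability Omega R.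
Implicit Types (f g : Omega -> R) (k : R).

Lemma integrable_le_norm f g : measurable_fun setT f ->
  P.-integrable setT (EFin \o g) -> (forall w, `|f w| <= `|g w|) ->
  P.-integrable setT (EFin \o f).
Proof.
move=> mf ig fg; apply: le_integrable ig => //; first exact/measurable_EFinP.
by move=> w _ /=; rewrite lee_fin.
Qed.

Lemma integrable_cst k : P.-integrable setT (EFin \o (fun _ => k)).
Proof. exact: finite_measure_integrable_cst. Qed.

Lemma integrableD_fun f g : P.-integrable setT (EFin \o f) ->
  P.-integrable setT (EFin \o g) ->
  P.-integrable setT (EFin \o (fun w => f w + g w)).
Proof. by move=> fi gi; apply: eq_integrable (integrableD measurableT fi gi). Qed.

Lemma integrableZ_fun k f : P.-integrable setT (EFin \o f) ->
  P.-integrable setT (EFin \o (fun w => k * f w)).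
Proof. by move=> fi; apply: eq_integrable (integrableZl measurableT k fi). Qed.

Lemma integrable_sum_fun (I : Type) (s : seq I) (F : I -> Omega -> R) :
  (forall i, P.-integrable setT (EFin \o F i)) ->
  P.-integrable setT (EFin \o (fun w => \sum_(i <- s) F i w)).
Proof.
move=> Fi; have : P.-integrable setT (fun w => \sum_(i <- s) (EFin \o F i) w).
  exact: integrable_sum.
by apply: eq_integrable => // w _ /=; rewrite sumEFin.
Qed.

Lemma sq_int_measurable f : sq_int P f -> measurable_fun setT f.
Proof. by case. Qed.

Lemma sq_int_integrableM f g : sq_int P f -> sq_int P g ->
  P.-integrable setT (EFin \o (fun w => f w * g w)).
Proof.
case=> mf f2i [mg g2i].
apply: (integrable_le_norm (g := fun w => f w ^+ 2 + g w ^+ 2)).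
- exact: measurable_funM.
- exact: integrableD_fun.
move=> w; rewrite [X in _ <= X]ger0_norm ?addr_ge0 ?sqr_ge0 // normrM.
rewrite -[f w ^+ 2]real_normK ?num_real // -[g w ^+ 2]real_normK ?num_real //.
have := sqr_ge0 (`|f w| - `|g w|); nra.
Qed.

Lemma eq_sq_int f g : f =1 g -> sq_int P f -> sq_int P g.
Proof. by move=> /funext ->. Qed.

Lemma sq_int_cst k : sq_int P (fun _ => k).
Proof. by split; [exact: measurable_cst | exact: integrable_cst]. Qed.

Lemma sq_intZ k f : sq_int P f -> sq_int P (fun w => k * f w).
Proof.
case=> mf f2i; split; first exact: measurable_funM.
by apply: eq_integrable (integrableZ_fun (k ^+ 2) f2i) => // w _ /=; rewrite exprMn.
Qed.

Lemma sq_intD f g : sq_int P f -> sq_int P g -> sq_int P (fun w => f w + g w).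
Proof.
move=> [mf f2i] [mg g2i]; split; first exact: measurable_funD.
apply: (integrable_le_norm (g := fun w => 2 * f w ^+ 2 + 2 * g w ^+ 2)).
- exact/measurable_funX/measurable_funD.
- by apply: integrableD_fun; apply: integrableZ_fun.
move=> w; rewrite ger0_norm ?sqr_ge0 // ger0_norm; last first.
  by rewrite addr_ge0 // mulr_ge0 // sqr_ge0.
have := sqr_ge0 (f w - g w); nra.
Qed.

Lemma sq_int_sum (I : Type) (s : seq I) (F : I -> Omega -> R) :
  (forall i, sq_int P (F i)) -> sq_int P (fun w => \sum_(i <- s) F i w).
Proof.
move=> Fi; elim: s => [|i s IH].
  by apply: eq_sq_int (sq_int_cst 0) => w; rewrite big_nil.
by apply: eq_sq_int (sq_intD (Fi i) IH) => w; rewrite big_cons.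
Qed.

Lemma eq_Exp f g : f =1 g -> Exp P f = Exp P g.
Proof. by move=> /funext ->. Qed.

Lemma ExpD f g : P.-integrable setT (EFin \o f) ->
  P.-integrable setT (EFin \o g) -> Exp P (fun w => f w + g w) = Exp P f + Exp P g.
Proof. by move=> fi gi; rewrite /Exp RintegralD. Qed.

Lemma ExpZ k f : P.-integrable setT (EFin \o f) ->
  Exp P (fun w => k * f w) = k * Exp P f.
Proof. by move=> fi; rewrite /Exp RintegralZl. Qed.

Lemma Exp_ge0 f : (forall w, 0 <= f w) -> 0 <= Exp P f.
Proof. by move=> f0; rewrite /Exp Rintegral_ge0. Qed.

Lemma Exp_sum (I : Type) (s : seq I) (F : I -> Omega -> R) :
  (forall i, P.-integrable setT (EFin \o F i)) ->
  Exp P (fun w => \sum_(i <- s) F i w) = \sum_(i <- s) Exp P (F i).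
Proof.
move=> Fi; elim: s => [|i s IH].
  rewrite big_nil (eq_Exp (g := fun _ => 0 * 0)) => [|w]; last by rewrite big_nil mulr0.
  by rewrite ExpZ ?mul0r //; exact: integrable_cst.
rewrite big_cons -IH -ExpD //; last exact: integrable_sum_fun.
by apply: eq_Exp => w; rewrite big_cons.
Qed.

End SquareIntegrable.

(* Evaluate at t = - a / (|b| + 1). *)
Lemma quadratic_ge0_lin_eq0 (R : realFieldType) (a b : R) :
  (forall t, 0 <= 2 * t * a + t ^+ 2 * b) -> a = 0.
Proof.
move=> ge0; apply/eqP/negPn/negP => a_neq0.
pose k := `|b| + 1.
have k_gt0 : 0 < k by rewrite ltr_pwDr.
have b_lt : b < 2 * k by rewrite (le_lt_trans (ler_norm b)) // /k; have := normr_ge0 b; lra.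
have a2_gt0 : 0 < a ^+ 2 by rewrite lt_def sqr_ge0 sqrf_eq0 a_neq0.
have : 0 <= (2 * (- a / k) * a + (- a / k) ^+ 2 * b) * k ^+ 2.
  by rewrite mulr_ge0 ?sqr_ge0.
have -> : (2 * (- a / k) * a + (- a / k) ^+ 2 * b) * k ^+ 2 = a ^+ 2 * (b - 2 * k).
  by field; rewrite gt_eqF.
by rewrite pmulr_rge0 // subr_ge0 leNgt b_lt.
Qed.

Section Rayleigh.
Context {R : realType} {p : nat}.
Implicit Types u v w c : 'rV[R]_p.

Definition sqnorm v := \sum_j v 0 j ^+ 2.
Definition dotr u v := \sum_j u 0 j * v 0 j.

Lemma sqnorm_ge0 v : 0 <= sqnorm v.
Proof. by apply: sumr_ge0 => j _; rewrite sqr_ge0. Qed.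

Lemma sqnorm_eq0 v : sqnorm v = 0 -> v = 0.
Proof.
move=> /eqP; rewrite psumr_eq0 => [/allP v0|j _]; last by rewrite sqr_ge0.
apply/rowP => j; rewrite mxE.
by have /= := v0 j (mem_index_enum _); rewrite sqrf_eq0 => /eqP.
Qed.

Lemma sqnormZ a v : sqnorm (a *: v) = a ^+ 2 * sqnorm v.
Proof. by rewrite /sqnorm big_distrr; apply: eq_bigr => j _; rewrite mxE exprMn. Qed.

Lemma sqnormDZ u w t :
  sqnorm (u + t *: w) = sqnorm u + 2 * t * dotr u w + t ^+ 2 * sqnorm w.
Proof.
rewrite /sqnorm /dotr !big_distrr -!big_split /=; apply: eq_bigr => j _.
by rewrite !mxE; ring.
Qed.

Lemma sqnorm_eq1_coord v j : sqnorm v = 1 -> `|v 0 j| <= 1.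
Proof.
move=> v1; have : v 0 j ^+ 2 <= 1.
  by rewrite -v1 /sqnorm (bigD1 j) //= lerDl sumr_ge0 // => i _; rewrite sqr_ge0.
rewrite -real_normK ?num_real //; have := normr_ge0 (v 0 j); nra.
Qed.

Lemma continuous_sqnorm : continuous sqnorm.
Proof.
apply: (@continuous_big _ _ +%R 0 xpredT _ _ _ (fun j v => v 0 j ^+ 2)).
  exact: add_continuous.
move=> j _ v; apply: (@continuousM R _ (fun v => v 0 j) (fun v => v 0 j));
  exact: coord_continuous.
Qed.

Variable A : 'M[R]_p.
Hypothesis A_sym : forall j k, A j k = A k j.

Definition qform u v := \sum_j \sum_k u 0 j * A j k * v 0 k.

Lemma qformC u v : qform u v = qform v u.
Proof.
rewrite /qform exchange_big; apply: eq_bigr => j _; apply: eq_bigr => k _.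
by rewrite A_sym; ring.
Qed.

Lemma qformZ a v : qform (a *: v) (a *: v) = a ^+ 2 * qform v v.
Proof.
rewrite /qform !big_distrr; apply: eq_bigr => j _.
by rewrite !big_distrr; apply: eq_bigr => k _; rewrite !mxE /=; ring.
Qed.

Lemma qformDZ u w t :
  qform (u + t *: w) (u + t *: w) = qform u u + 2 * t * qform u w + t ^+ 2 * qform w w.
Proof.
have -> : 2 * t * qform u w = t * qform u w + t * qform w u by rewrite (qformC w); ring.
rewrite /qform !big_distrr -!big_split /=; apply: eq_bigr => j _.
by rewrite !big_distrr -!big_split /=; apply: eq_bigr => k _; rewrite !mxE; ring.
Qed.

Lemma qform_mulmx u v : qform u v = dotr (u *m A) v.
Proof.
rewrite /qform /dotr exchange_big; apply: eq_bigr => k _.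
by rewrite mxE big_distrl.
Qed.

Lemma continuous_qform : continuous (fun v => qform v v).
Proof.
apply: (@continuous_big _ _ +%R 0 xpredT _ _ _
  (fun j v => \sum_k v 0 j * A j k * v 0 k)); first exact: add_continuous.
move=> j _; apply: (@continuous_big _ _ +%R 0 xpredT _ _ _
  (fun k v => v 0 j * A j k * v 0 k)); first exact: add_continuous.
move=> k _ v; apply: (@continuousM R _ (fun v => v 0 j * A j k) (fun v => v 0 k));
  last exact: coord_continuous.
by apply: (@continuousM R _ (fun v => v 0 j) (fun => A j k));
  [exact: coord_continuous | exact: cst_continuous].
Qed.

Lemma qform_ge_on_sphere m :
  (forall u, sqnorm u = 1 -> m <= qform u u) -> forall u, m * sqnorm u <= qform u u.
Proof.
move=> m_le u; have [u0|u_neq0] := eqVneq u 0.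
  by rewrite u0 -(scale0r 0) sqnormZ qformZ expr0n !mul0r mulr0.
have su_gt0 : 0 < sqnorm u.
  by rewrite lt_def sqnorm_ge0 andbT; apply: contra_neq u_neq0; exact: sqnorm_eq0.
pose s := Num.sqrt (sqnorm u).
have s_gt0 : 0 < s by rewrite sqrtr_gt0.
have s2 : s ^+ 2 = sqnorm u by rewrite sqr_sqrtr // ltW.
have := m_le (s^-1 *: u); rewrite qformZ sqnormZ -s2 exprVn mulVf ?gt_eqF ?exprn_gt0 //.
by move/(_ erefl); rewrite ler_pdivlMl ?exprn_gt0 // mulrC.
Qed.

Lemma qform_min_on_sphere : (0 < p)%N ->
  exists2 c, sqnorm c = 1 & forall u, qform c c * sqnorm u <= qform u u.
Proof.
move=> p_gt0; pose sphere := [set v | sqnorm v = 1].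
have sphere0 : sphere !=set0.
  exists (\row_j (j == Ordinal p_gt0)%:R); rewrite /sphere /= /sqnorm (bigD1 (Ordinal p_gt0)) //=.
  rewrite mxE eqxx expr1n big1 ?addr0 // => j /negbTE j_neq.
  by rewrite mxE j_neq expr0n.
have sphere_compact : compact sphere.
  apply: bounded_closed_compact.
    apply: filterS (nbhs_pinfty_ge (num_real (1 : R))) => M M1 v /= v1.
    apply: le_trans M1; rewrite -[X in X <= _]/(mx_norm v) mx_normrE.
    by apply/bigmax_leP; split => // -[i j] _ /=; rewrite (ord1 i) sqnorm_eq1_coord.
  apply: (@preimage_closed _ _ sqnorm [set 1]); last exact: closed_eq.
  by move=> v _; exact: continuous_sqnorm.
have [c c_sphere c_min] :=
  compact_EVT_min sphere0 sphere_compact (continuous_subspaceT continuous_qform).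
exists c; first by move: c_sphere; rewrite inE.
by apply: qform_ge_on_sphere => u u1; apply: c_min; rewrite inE.
Qed.

Lemma qform_min_eigenvector c : sqnorm c = 1 ->
  (forall u, qform c c * sqnorm u <= qform u u) -> c *m A = qform c c *: c.
Proof.
move=> c1 c_min; set m := qform c c.
have stationary w : qform c w = m * dotr c w.
  apply/eqP; rewrite -subr_eq0; apply/eqP.
  apply: (@quadratic_ge0_lin_eq0 _ _ (qform w w - m * sqnorm w)) => t.
  have := c_min (c + t *: w); rewrite qformDZ sqnormDZ c1 -/m; lra.
set e := c *m A - m *: c.
have e_orth w : dotr e w = 0.
  rewrite -[RHS](subrr (qform c w)) [X in _ - X]stationary qform_mulmx.
  by rewrite /dotr big_distrr -sumrB; apply: eq_bigr => j _; rewrite !mxE /=; ring.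
by apply/eqP; rewrite -subr_eq0; apply/eqP/sqnorm_eq0; exact: e_orth.
Qed.

Lemma min_eig_le_qform (L : R) : (forall a, eigenvalue A a -> L <= a) ->
  forall v, L * sqnorm v <= qform v v.
Proof.
move=> L_min v; have [p0|p_gt0] := posnP p.
  have sum0 (F : 'I_p -> R) : \sum_j F j = 0.
    by apply: big1 => j _; have := ltn_ord j; rewrite [in X in (_ < X)%N]p0.
  by rewrite /sqnorm /qform !sum0 mulr0.
have [c c1 c_min] := qform_min_on_sphere p_gt0.
have c_eig : eigenvalue A (qform c c).
  apply/eigenvalueP; exists c; first exact: qform_min_eigenvector.
  apply/eqP => c0; move: c1; rewrite c0 -(scale0r 0) sqnormZ expr0n mul0r.
  by move/eqP; rewrite eq_sym oner_eq0.
exact: le_trans (ler_wpM2r (sqnorm_ge0 v) (L_min _ c_eig)) (c_min v).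
Qed.

End Rayleigh.

Definition clamp (R : realDomainType) (M a : R) := Num.max (- M) (Num.min M a).

Lemma norm_clamp_le_bound (R : realDomainType) (M a : R) : 0 <= M -> `|clamp M a| <= M.
Proof.
move=> M0; rewrite /clamp ler_norml; apply/andP; split; first by rewrite le_max lexx.
by rewrite ge_max ge_min lexx andbT; lra.
Qed.

Lemma norm_clamp_le (R : realDomainType) (M a : R) : 0 <= M -> `|clamp M a| <= `|a|.
Proof.
move=> M0; have a_le := ler_norm a; have a_ge0 := normr_ge0 a.
have a_ge : - `|a| <= a by rewrite lerNl -normrN ler_norm.
rewrite /clamp ler_norml le_max ge_max le_min ge_min.
apply/andP; split; [apply/orP; right; apply/andP; split | apply/andP; split];
  try (apply/orP; right); lra.
Qed.

Lemma clamp_id (R : realDomainType) (M a : R) : `|a| <= M -> clamp M a = a.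
Proof.
rewrite ler_norml => /andP[Ma aM].
by apply/eqP; rewrite eq_le /clamp ge_max le_max ge_min le_min lexx Ma aM !orbT.
Qed.

Section Truncation.
Context {dm : measure_display} {Omega : measurableType dm} {R : realType}.
Variable P : probability Omega R.

Lemma measurable_clamp (M : R) (f : Omega -> R) : measurable_fun setT f ->
  measurable_fun setT (fun w => clamp M (f w)).
Proof.
move=> mf; apply: measurable_maxr; first exact: measurable_cst.
by apply: measurable_minr => //; exact: measurable_cst.
Qed.

(* Dominated convergence: the truncations converge pointwise, dominated by |xt psi|. *)
Lemma Exp_mul_eq0_clamp (xt psi : Omega -> R) : sq_int P xt -> sq_int P psi ->
  (forall n : nat, Exp P (fun w => xt w * clamp n%:R (psi w)) = 0) ->
  Exp P (fun w => xt w * psi w) = 0.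
Proof.
move=> xt2 psi2 trunc0.
have m_xtpsi := measurable_funM (sq_int_measurable xt2) (sq_int_measurable psi2).
have i_xtpsi := sq_int_integrableM xt2 psi2.
pose f_ n w := (xt w * clamp n%:R (psi w))%:E.
have f_dom n w : `|xt w * clamp n%:R (psi w)| <= `|xt w * psi w|.
  by rewrite !normrM ler_wpM2l // norm_clamp_le.
have f_int n : P.-integrable setT (f_ n).
  apply: integrable_le_norm i_xtpsi (f_dom n).
  exact: measurable_funM (sq_int_measurable xt2) (measurable_clamp _ (sq_int_measurable psi2)).
have absi : P.-integrable setT (fun w => (`|xt w * psi w|)%:E).
  apply: integrable_le_norm i_xtpsi _ => [|w]; last by rewrite normr_id.
  exact: measurableT_comp.
have f_cvg : {ae P, forall w, setT w ->
    (f_ ^~ w @ \oo --> (xt w * psi w)%:E)%classic}.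
  apply: aeW => w _; apply: cvg_near_cst; near=> n.
  rewrite /f_ clamp_id //; near: n; exact: nbhs_infty_ger.
have f_le : {ae P, forall w n, setT w -> (`|f_ n w| <= `|xt w * psi w|%:E)%E}.
  by apply: aeW => w n _; rewrite /= lee_fin f_dom.
have [_ _] := dominated_convergence measurableT (fun n => measurable_int _ (f_int n))
  (measurable_int _ (integrable_le_norm m_xtpsi i_xtpsi (fun w => lexx _)))
  f_cvg absi f_le.
have -> : (fun n => \int[P]_(w in setT) f_ n w)%E = (fun _ => 0%E).
  apply/funext => n; have := trunc0 n; rewrite /Exp /Rintegral => int0.
  by rewrite -[LHS]fineK ?integrable_fin_num // int0.
move/cvg_lim => /(_ (@ereal_hausdorff R)) lim0.
by rewrite /Exp /Rintegral -lim0 lim_cst.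
Unshelve. all: by end_near.
Qed.

End Truncation.

Section Compatibility.
Context {dm : measure_display} {Omega : measurableType dm} {R : realType}.
Variable P : probability Omega R.
Context {p d : nat}.
Variables (x : Omega -> 'rV[R]_p) (z : Omega -> 'rV[R]_d).
Variables (h : 'rV[R]_d -> 'rV[R]_p) (LX2 : R).
Hypothesis x2 : forall j : 'I_p, sq_int P (fun w => x w 0 j).
Hypothesis hE : cond_exp P x z h.
Hypothesis C3 : condC3 P x z h LX2.

Let xt j w := x w 0 j - h (z w) 0 j.

Lemma sq_int_cond_exp j : sq_int P (fun w => h (z w) 0 j).
Proof. by case: C3 => _ [_ []]. Qed.

Lemma sq_int_xtilde j : sq_int P (xt j).
Proof.
apply: eq_sq_int (sq_intD (x2 j) (sq_intZ (-1) (sq_int_cond_exp j))) => w.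
by rewrite mulN1r.
Qed.

Lemma Exp_xtilde_orth j (psi : 'rV[R]_d -> R) : sq_int P (fun w => psi (z w)) ->
  Exp P (fun w => xt j w * psi (z w)) = 0.
Proof.
move=> psi2; apply: (Exp_mul_eq0_clamp (sq_int_xtilde j) psi2) => n.
have [_ [_ orth]] := hE j; apply: (orth (fun v => clamp n%:R (psi v))).
  exact: measurable_clamp _ (sq_int_measurable psi2).
by exists n%:R => v; exact: norm_clamp_le_bound.
Qed.

Lemma Exp_sqr_xtilde (D : 'cV[R]_p) :
  Exp P (fun w => (\sum_j xt j w * D j 0) ^+ 2) = qform (SigmaXt P x z h) D^T D^T.
Proof.
have xtM j k := sq_int_integrableM (sq_int_xtilde j) (sq_int_xtilde k).
rewrite (eq_Exp P (g := fun w => \sum_j \sum_k (D j 0 * D k 0) * (xt j w * xt k w))).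
  rewrite Exp_sum => [|j]; last by apply: integrable_sum_fun => k; exact: integrableZ_fun.
  apply: eq_bigr => j _; rewrite Exp_sum => [|k]; last exact: integrableZ_fun.
  by apply: eq_bigr => k _; rewrite ExpZ // !mxE; ring.
move=> w; rewrite expr2 big_distrl; apply: eq_bigr => j _ /=.
by rewrite big_distrr; apply: eq_bigr => k _ /=; ring.
Qed.

(* Split x = xtilde + h(z): the cross term vanishes because xtilde is orthogonal
   to square integrable functions of z. *)
Lemma min_eig_le_normQ2 (D : 'cV[R]_p) (g : 'rV[R]_d -> R) : L2z P z g ->
  LX2 * \sum_j D j 0 ^+ 2 <= normQ2 P x z D g.
Proof.
move=> g2; pose psi v := \sum_j h v 0 j * D j 0 + g v.
pose U w := \sum_j xt j w * D j 0.
have U2 : sq_int P U.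
  by apply: sq_int_sum => j; apply: eq_sq_int (sq_intZ (D j 0) (sq_int_xtilde j)) => w;
    rewrite mulrC.
have psi2 : sq_int P (fun w => psi (z w)).
  apply: sq_intD g2; apply: sq_int_sum => j.
  by apply: eq_sq_int (sq_intZ (D j 0) (sq_int_cond_exp j)) => w; rewrite mulrC.
have U_orth : Exp P (fun w => U w * psi (z w)) = 0.
  rewrite (eq_Exp P (g := fun w => \sum_j D j 0 * (xt j w * psi (z w)))); last first.
    by move=> w; rewrite big_distrl; apply: eq_bigr => j _ /=; ring.
  rewrite Exp_sum => [|j]; last exact/integrableZ_fun/sq_int_integrableM/psi2/sq_int_xtilde.
  by rewrite big1 // => j _; rewrite ExpZ ?Exp_xtilde_orth ?mulr0 //;
    exact/sq_int_integrableM/psi2/sq_int_xtilde.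
have UpsiM := sq_int_integrableM U2 psi2.
have -> : normQ2 P x z D g = Exp P (fun w => U w ^+ 2) +
    (2 * Exp P (fun w => U w * psi (z w)) + Exp P (fun w => psi (z w) ^+ 2)).
  have i2Upsi := integrableZ_fun 2 UpsiM.
  rewrite -ExpZ // -(ExpD i2Upsi (proj2 psi2)).
  rewrite -(ExpD (proj2 U2) (integrableD_fun i2Upsi (proj2 psi2))).
  apply: eq_Exp => w; rewrite /U /psi.
  have -> : \sum_j x w 0 j * D j 0 = \sum_j xt j w * D j 0 + \sum_j h (z w) 0 j * D j 0.
    by rewrite -big_split; apply: eq_bigr => j _ /=; rewrite /xt; ring.
  ring.
rewrite U_orth mulr0 add0r -[X in X <= _]addr0; apply: lerD; last first.
  by apply: Exp_ge0 => w; exact: sqr_ge0.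
have [[_ L_min] _] := C3.
have SigmaXt_sym j k : SigmaXt P x z h j k = SigmaXt P x z h k j.
  by rewrite !mxE; apply: eq_Exp => w; rewrite mulrC.
have := min_eig_le_qform SigmaXt_sym L_min D^T.
rewrite /U Exp_sqr_xtilde /sqnorm.
by under eq_bigr do rewrite mxE.
Qed.

End Compatibility.

Section SemiInnerSubspace.
Context {dm : measure_display} {Omega : measurableType dm} {R : realType}.
Variable P : probability Omega R.
Context {d : nat}.
Variables (z : Omega -> 'rV[R]_d) (G : set ('rV[R]_d -> R)).
Variable J : ('rV[R]_d -> R) -> ('rV[R]_d -> R) -> R.
Hypothesis GJ : semi_inner_subspace P z G J.
Implicit Types g : 'rV[R]_d -> R.

Lemma semi_inner_L2z g : G g -> L2z P z g.
Proof. by case: GJ => L2G _; exact: L2G. Qed.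

Lemma G_lin (a b : R) g1 g2 : G g1 -> G g2 -> G (fun v => a * g1 v + b * g2 v).
Proof. by case: GJ => _ [_ [GD [GZ _]]] G1 G2; apply: GD; apply: GZ. Qed.

Lemma GZ (a : R) g : G g -> G (fun v => a * g v).
Proof. by case: GJ => _ [_ [_ [GZ _]]]; exact: GZ. Qed.

Lemma J_sym g1 g2 : G g1 -> G g2 -> J g1 g2 = J g2 g1.
Proof. by case: GJ => _ [_ [_ [_ [JC _]]]]; exact: JC. Qed.

Lemma J_ge0 g : G g -> 0 <= J g g.
Proof. by case: GJ => _ [_ [_ [_ [_ [_ Jge0]]]]]; exact: Jge0. Qed.

Lemma JLl (a b : R) g1 g2 g3 : G g1 -> G g2 -> G g3 ->
  J (fun v => a * g1 v + b * g2 v) g3 = a * J g1 g3 + b * J g2 g3.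
Proof.
case: GJ => _ [G0 [_ [_ [_ [Jlin _]]]]] G1 G2 G3.
have JZl c g : G g -> J (fun v => c * g v) g3 = c * J g g3.
  move=> Gg; have J0l : J (fun _ => 0) g3 = 0.
    have := Jlin 1 _ _ _ G0 G0 G3.
    have -> : (fun _ : 'rV[R]_d => 1 * 0 + 0) = (fun _ => 0 : R).
      by apply/funext => v; rewrite mulr0 addr0.
    by rewrite mul1r => ?; lra.
  have := Jlin c _ _ _ Gg G0 G3; rewrite J0l addr0 => <-.
  by congr J; apply/funext => v; rewrite addr0.
by rewrite (Jlin a g1 (fun v => b * g2 v) g3 G1 (GZ b G2) G3) JZl.
Qed.

Lemma J_lin_sqr (a b : R) g1 g2 : G g1 -> G g2 ->
  J (fun v => a * g1 v + b * g2 v) (fun v => a * g1 v + b * g2 v) =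
  a ^+ 2 * J g1 g1 + 2 * a * b * J g1 g2 + b ^+ 2 * J g2 g2.
Proof.
move=> G1 G2; have G12 := G_lin a b G1 G2.
rewrite JLl // (J_sym G1 G12) (J_sym G2 G12) !JLl // (J_sym G2 G1); ring.
Qed.

Lemma JZ (a : R) g : G g -> J (fun v => a * g v) (fun v => a * g v) = a ^+ 2 * J g g.
Proof.
move=> Gg; have := J_lin_sqr a 0 Gg Gg.
have -> : (fun v => a * g v + 0 * g v) = (fun v => a * g v).
  by apply/funext => v; rewrite mul0r addr0.
by move=> ->; ring.
Qed.

End SemiInnerSubspace.

Section L1Norm.
Context {R : realType} {p : nat}.
Implicit Types b v : 'cV[R]_p.

Definition supp_l1 b v := \sum_(j | b j 0 != 0) `|v j 0|.

Lemma l1_ge0 b : 0 <= l1 b.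
Proof. by apply: sumr_ge0. Qed.

Lemma l1Z (s : R) b : 0 <= s -> l1 (s *: b) = s * l1 b.
Proof.
by move=> s0; rewrite /l1 big_distrr; apply: eq_bigr => j _; rewrite mxE normrM ger0_norm.
Qed.

Lemma l1_segment_convex (t : R) b v : 0 <= t -> t <= 1 ->
  l1 (b + t *: v) <= (1 - t) * l1 b + t * l1 (b + v).
Proof.
move=> t0 t1; rewrite /l1 !big_distrr -big_split /=; apply: ler_sum => j _.
have -> : (b + t *: v) j 0 = (1 - t) * b j 0 + t * (b + v) j 0 by rewrite !mxE; ring.
have t1' : 0 <= 1 - t by lra.
by apply: le_trans (ler_normD _ _) _; rewrite !normrM (ger0_norm t0) (ger0_norm t1').
Qed.

(* Reverse triangle inequality on the support of b, triangle inequality off it. *)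
Lemma l1_supp_lower b v : l1 b + l1 v - 2 * supp_l1 b v <= l1 (b + v).
Proof.
rewrite /supp_l1 /l1 big_distrr -big_split /= [X in _ - X]big_mkcond -sumrB.
apply: ler_sum => j _ /=.
rewrite mxE; case: eqVneq => [->|_] /=; first by rewrite normr0 !add0r subr0.
have := ler_normD (b j 0 + v j 0) (- v j 0); rewrite normrN addrK; lra.
Qed.

(* Pointwise AM-GM: 2 lam |v_j| <= L/2 v_j^2 + 2 lam^2 / L. *)
Lemma supp_l1_le (L lam : R) b v : 0 < L ->
  2 * lam * supp_l1 b v <= L / 2 * \sum_j v j 0 ^+ 2 + 2 * lam ^+ 2 / L * (s0 b)%:R.
Proof.
move=> L_gt0.
have -> : 2 * lam ^+ 2 / L * (s0 b)%:R = \sum_(j | b j 0 != 0) 2 * lam ^+ 2 / L.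
  by rewrite sumr_const /s0 mulr_natr.
rewrite /supp_l1 big_distrr.
apply: (@le_trans _ _ (\sum_(j | b j 0 != 0) (L / 2 * v j 0 ^+ 2 + 2 * lam ^+ 2 / L))).
  apply: ler_sum => j _; rewrite -[v j 0 ^+ 2]real_normK ?num_real //.
  have -> : L / 2 * `|v j 0| ^+ 2 + 2 * lam ^+ 2 / L =
      2 * lam * `|v j 0| + (L * `|v j 0| - 2 * lam) ^+ 2 / (2 * L).
    by field; rewrite gt_eqF.
  by rewrite lerDl divr_ge0 ?sqr_ge0 // mulr_ge0 // ltW.
rewrite big_split /=; apply: lerD => //; rewrite -mulr_sumr.
apply: ler_wpM2l; first by rewrite divr_ge0 // ltW.
rewrite [X in _ <= X](bigID (fun j => b j 0 != 0)) /= lerDl.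
by apply: sumr_ge0 => j _; exact: sqr_ge0.
Qed.

End L1Norm.

(* (19 delta)^2 <= 4 s^2 = 2 delta as long as delta <= 2 / 361. *)
Lemma sqrt_half_ge (R : realFieldType) (delta s : R) : 0 < delta ->
  delta <= 1 / 253%:R -> 0 <= s -> s ^+ 2 = delta / 2 -> 19 * delta <= 2 * s.
Proof.
move=> d0 d1 s0 s2; rewrite leNgt; apply/negP => lt2s.
have : 0 <= delta * (2 - 361 * delta) by rewrite mulr_ge0 ?ltW //; lra.
have : 0 < (2 * s + 19 * delta) * (19 * delta - 2 * s) by rewrite mulr_gt0 //; lra.
nra.
Qed.

(* With AM-GM, u r s <= (u^2 + (r s)^2) / 2, the claim reduces to 19 delta <= 2 s. *)
Lemma tau_le_half_of_budget (R : realFieldType) (A u Q B r s delta : R) :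
  Q / 2 + A + B / 2 <= 9 / 2 * (delta * r ^+ 2) -> u ^+ 2 = Q + B -> 0 <= u ->
  19 * delta <= 2 * s -> s ^+ 2 = delta / 2 -> 0 < r -> 0 < s ->
  A / (r * s) + u <= r / 2.
Proof.
move=> budget u2 u0 ds s2 r0 s0.
have : A <= (r / 2 - u) * (r * s).
  have := sqr_ge0 (u - r * s); have := ler_wpM2l (sqr_ge0 r) ds.
  have : (r * s) ^+ 2 = r ^+ 2 * (delta / 2) by rewrite exprMn s2.
  nra.
rewrite -ler_pdivrMr ?mulr_gt0 //; lra.
Qed.

Lemma le_of_rescaled_le_half (R : realFieldType) (r T : R) : 0 < r -> 0 <= T ->
  r / (r + T) * T <= r / 2 -> T <= r.
Proof.
move=> r0 T0; rewrite mulrAC ler_pdivrMr; last by lra.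
by move=> rT; rewrite -(ler_pM2l r0); lra.
Qed.

Section Predictors.
Context {R : realType} {p d n : nat}.
Variables (X : 'M[R]_(n, p)) (Zs : 'I_n -> 'rV[R]_d).
Implicit Types (b : 'cV[R]_p) (g : 'rV[R]_d -> R).

Lemma fvalDZ b1 b2 g1 g2 (s : R) i :
  fval X Zs (b1 + s *: b2) (fun v => g1 v + s * g2 v) i =
  fval X Zs b1 g1 i + s * fval X Zs b2 g2 i.
Proof.
rewrite /fval; have -> : \sum_j X i j * (b1 + s *: b2) j 0 =
    \sum_j X i j * b1 j 0 + s * \sum_j X i j * b2 j 0.
  by rewrite mulr_sumr -big_split; apply: eq_bigr => j _ /=; rewrite !mxE; ring.
ring.
Qed.

Lemma fvalZ b g (s : R) i : fval X Zs (s *: b) (fun v => s * g v) i = s * fval X Zs b g i.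
Proof.
rewrite /fval mulrDr mulr_sumr; congr (_ + _).
by apply: eq_bigr => j _; rewrite !mxE /=; ring.
Qed.

End Predictors.

Section Scaling.
Context {dm : measure_display} {Omega : measurableType dm} {R : realType}.
Variable P : probability Omega R.
Context {p d : nat}.
Variables (x : Omega -> 'rV[R]_p) (z : Omega -> 'rV[R]_d).
Variables (G : set ('rV[R]_d -> R)) (J : ('rV[R]_d -> R) -> ('rV[R]_d -> R) -> R).
Hypothesis x2 : forall j : 'I_p, sq_int P (fun w => x w 0 j).
Hypothesis GJ : semi_inner_subspace P z G J.
Implicit Types (b : 'cV[R]_p) (g : 'rV[R]_d -> R).

Lemma normQ2Z (s : R) b g : G g ->
  normQ2 P x z (s *: b) (fun v => s * g v) = s ^+ 2 * normQ2 P x z b g.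
Proof.
move=> Gg; have xb2 : sq_int P (fun w => \sum_j x w 0 j * b j 0 + g (z w)).
  apply: sq_intD (semi_inner_L2z GJ Gg); apply: sq_int_sum => j.
  by apply: eq_sq_int (sq_intZ (b j 0) (x2 j)) => w; rewrite mulrC.
rewrite /normQ2 -ExpZ; last by case: xb2.
apply: eq_Exp => w; rewrite -exprMn mulrDr mulr_sumr; congr (_ ^+ 2); congr (_ + _).
by apply: eq_bigr => j _; rewrite !mxE /=; ring.
Qed.

Lemma normQ2_ge0 b g : 0 <= normQ2 P x z b g.
Proof. by apply: Exp_ge0 => w; exact: sqr_ge0. Qed.

Variables (delta lambda mu r : R).

Lemma tau_ge0 b g : 0 <= lambda -> 0 <= r -> 0 <= tau P x z J delta lambda mu r b g.
Proof.
by move=> l0 r0; rewrite addr_ge0 ?sqrtr_ge0 // divr_ge0 ?mulr_ge0 ?sqrtr_ge0 ?l1_ge0.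
Qed.

Lemma tauZ (s : R) b g : 0 <= s -> G g ->
  tau P x z J delta lambda mu r (s *: b) (fun v => s * g v) =
  s * tau P x z J delta lambda mu r b g.
Proof.
move=> s0 Gg; rewrite /tau l1Z // normQ2Z // (JZ GJ) //.
have -> : s ^+ 2 * normQ2 P x z b g + mu ^+ 2 * (s ^+ 2 * J g g) =
    s ^+ 2 * (normQ2 P x z b g + mu ^+ 2 * J g g) by ring.
rewrite (sqrtrM _ (sqr_ge0 s)) sqrtr_sqr ger0_norm //; ring.
Qed.

End Scaling.

Section Estimator.
Context {dm : measure_display} {Omega : measurableType dm} {R : realType}.
Variable P : probability Omega R.
Context {p d n : nat}.
Variables (x : Omega -> 'rV[R]_p) (z : Omega -> 'rV[R]_d).
Variables (h : 'rV[R]_d -> 'rV[R]_p) (LX2 : R).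
Variables (G : set ('rV[R]_d -> R)) (J : ('rV[R]_d -> R) -> ('rV[R]_d -> R) -> R).
Variables (beta0 : 'cV[R]_p) (g0 : 'rV[R]_d -> R).
Variables (X : 'M[R]_(n, p)) (Zs : 'I_n -> 'rV[R]_d) (E : 'cV[R]_n).
Variables (delta0 lambda mu Rr : R) (betahat : 'cV[R]_p) (ghat : 'rV[R]_d -> R).
Hypothesis x2 : forall j : 'I_p, sq_int P (fun w => x w 0 j).
Hypothesis hE : cond_exp P x z h.
Hypothesis GJ : semi_inner_subspace P z G J.
Hypothesis Gg0 : G g0.
Hypothesis delta0_gt0 : 0 < delta0.
Hypothesis delta0_small : delta0 <= 1 / 253%:R.
Hypothesis lambda_gt0 : 0 < lambda.
Hypothesis Rr_gt0 : 0 < Rr.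
Hypothesis C3 : condC3 P x z h LX2.
Hypothesis J_g0 : mu ^+ 2 * (2 * J g0 g0) <= delta0 * Rr ^+ 2.
Hypothesis lambda_s0 : 4 * lambda ^+ 2 * (s0 beta0)%:R / LX2 <= delta0 * Rr ^+ 2.
Hypothesis data_in_T : in_T P x z X Zs E G J delta0 lambda mu Rr.
Hypothesis minimizer : is_minimizer X Zs E G J beta0 g0 lambda mu betahat ghat.

Let dh := betahat - beta0.
Let gh v := ghat v - g0 v.
Let F i := fval X Zs dh gh i.

Lemma G_error : G gh.
Proof.
have [Gghat _] := minimizer.
have := G_lin GJ 1 (-1) Gghat Gg0; congr G; apply/funext => v.
by rewrite /gh mul1r mulN1r.
Qed.

Let crit_seg s := (\sum_i (E i 0 - s * F i) ^+ 2) / n%:R + lambda * l1 (beta0 + s *: dh)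
  + mu ^+ 2 * (J g0 g0 + 2 * s * J g0 gh + s ^+ 2 * J gh gh).

Lemma crit_segment s :
  crit X Zs E J beta0 g0 lambda mu (beta0 + s *: dh) (fun v => g0 v + s * gh v) =
  crit_seg s.
Proof.
have -> : (fun v => g0 v + s * gh v) = (fun v => 1 * g0 v + s * gh v).
  by apply/funext => v; rewrite mul1r.
rewrite /crit (J_lin_sqr GJ _ _ Gg0 G_error) expr1n mul1r mulr1 /crit_seg.
congr (_ / _ + _ + _).
apply: eq_bigr => i _; rewrite (_ : (fun v => 1 * g0 v + s * gh v) = (fun v => g0 v + s * gh v)).
  by rewrite fvalDZ /F; congr (_ ^+ 2); ring.
by apply/funext => v; rewrite mul1r.
Qed.

Lemma crit_seg_convex t : 0 <= t -> t <= 1 ->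
  crit_seg t <= (1 - t) * crit_seg 0 + t * crit_seg 1.
Proof.
move=> t0 t1; have t1' : 0 <= 1 - t by lra.
have sq_conv : (\sum_i (E i 0 - t * F i) ^+ 2) / n%:R <=
    (1 - t) * ((\sum_i (E i 0 - 0 * F i) ^+ 2) / n%:R) +
    t * ((\sum_i (E i 0 - 1 * F i) ^+ 2) / n%:R).
  rewrite !mulrA -mulrDl ler_wpM2r ?invr_ge0 //.
  rewrite !mulr_sumr -big_split /=; apply: ler_sum => i _.
  have := mulr_ge0 (mulr_ge0 t0 t1') (sqr_ge0 (F i)); nra.
have l1_conv := l1_segment_convex beta0 dh t0 t1.
have J_conv : J g0 g0 + 2 * t * J g0 gh + t ^+ 2 * J gh gh <=
    (1 - t) * (J g0 g0 + 2 * 0 * J g0 gh + 0 ^+ 2 * J gh gh) +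
    t * (J g0 g0 + 2 * 1 * J g0 gh + 1 ^+ 2 * J gh gh).
  have := mulr_ge0 (mulr_ge0 t0 t1') (J_ge0 GJ G_error); nra.
have := ler_wpM2l (ltW lambda_gt0) l1_conv; have := ler_wpM2l (sqr_ge0 mu) J_conv.
rewrite /crit_seg scale0r scale1r addr0; lra.
Qed.

Lemma crit_seg_le t : 0 <= t -> t <= 1 -> crit_seg t <= crit_seg 0.
Proof.
move=> t0 t1; have crit10 : crit_seg 1 <= crit_seg 0.
  have e1 : (fun v => g0 v + 1 * gh v) = ghat.
    by apply/funext => v; rewrite mul1r /gh addrC subrK.
  have e0 : (fun v => g0 v + 0 * gh v) = g0 by apply/funext => v; rewrite mul0r addr0.
  rewrite -!crit_segment e1 e0 scale1r scale0r addr0 /dh addrC subrK.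
  by have [_ minimal] := minimizer; exact: minimal.
have := crit_seg_convex t0 t1; have := ler_wpM2l t0 crit10; lra.
Qed.

Lemma basic_inequality t : 0 <= t -> t <= 1 ->
  normn2 X Zs (t *: dh) (fun v => t * gh v) + lambda * l1 (t *: dh)
    + mu ^+ 2 * J (fun v => t * gh v) (fun v => t * gh v) / 2 <=
  2 * ((\sum_i E i 0 * fval X Zs (t *: dh) (fun v => t * gh v) i) / n%:R)
    + 2 * lambda * supp_l1 beta0 (t *: dh) + delta0 * Rr ^+ 2.
Proof.
move=> t0 t1; have ft i : fval X Zs (t *: dh) (fun v => t * gh v) i = t * F i.
  by rewrite fvalZ.
have sq_t : \sum_i fval X Zs (t *: dh) (fun v => t * gh v) i ^+ 2 = \sum_i (t * F i) ^+ 2.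
  by apply: eq_bigr => i _; rewrite ft.
have cross_t : \sum_i E i 0 * fval X Zs (t *: dh) (fun v => t * gh v) i =
    \sum_i E i 0 * (t * F i) by apply: eq_bigr => i _; rewrite ft.
have expand : \sum_i (E i 0 - t * F i) ^+ 2 = \sum_i (E i 0 - 0 * F i) ^+ 2
    - 2 * \sum_i E i 0 * (t * F i) + \sum_i (t * F i) ^+ 2.
  by rewrite mulr_sumr -sumrB -big_split; apply: eq_bigr => i _ /=; ring.
(* 0 <= J(2 g0 + t gh) absorbs the cross term J(g0, gh). *)
have J2 : 0 <= 4 * J g0 g0 + 4 * t * J g0 gh + t ^+ 2 * J gh gh.
  have := J_ge0 GJ (G_lin GJ 2 t Gg0 G_error); rewrite (J_lin_sqr GJ _ _ Gg0 G_error).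
  by congr (_ <= _); ring.
have := crit_seg_le t0 t1; rewrite /crit_seg /normn2 sq_t cross_t expand (JZ GJ _ G_error).
rewrite scale0r addr0.
have := ler_wpM2l (ltW lambda_gt0) (l1_supp_lower beta0 (t *: dh)).
have := mulr_ge0 (sqr_ge0 mu) J2.
move: J_g0; lra.
Qed.

Lemma rescaled_tau_le_half t : 0 < t -> t <= 1 ->
  tau P x z J delta0 lambda mu Rr (t *: dh) (fun v => t * gh v) <= Rr ->
  tau P x z J delta0 lambda mu Rr (t *: dh) (fun v => t * gh v) <= Rr / 2.
Proof.
move=> t0 t1 in_FR; have Ggt : G (fun v => t * gh v) := GZ GJ t G_error.
have [emp_dev noise] := data_in_T Ggt in_FR.
have LX2_gt0 : 0 < LX2 by case: C3 => _ [].
have compat := min_eig_le_normQ2 x2 hE C3 (t *: dh) (semi_inner_L2z GJ Ggt).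
have supp := supp_l1_le lambda beta0 (t *: dh) LX2_gt0.
have basic := basic_inequality (ltW t0) t1.
have invn_ge0 : 0 <= n%:R^-1 :> R by rewrite invr_ge0 ler0n.
have noise' := le_trans (ler_wpM2r invn_ge0 (ler_norm _)) noise.
move: emp_dev; rewrite ler_norml => /andP[emp_lo _].
have sd_gt0 : 0 < Num.sqrt (delta0 / 2) by rewrite sqrtr_gt0 divr_gt0.
have sd2 : Num.sqrt (delta0 / 2) ^+ 2 = delta0 / 2 by rewrite sqr_sqrtr // divr_ge0 // ltW.
set Q := normQ2 P x z _ _ in compat emp_lo *.
set B := mu ^+ 2 * J _ _ in basic *.
apply: (tau_le_half_of_budget (Q := Q) (B := B) _ _ _ (sqrt_half_ge _ _ _ sd2)) => //; last first.
  by rewrite sqr_sqrtr // addr_ge0 ?normQ2_ge0 // mulr_ge0 ?sqr_ge0 // (J_ge0 GJ).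
have s0_term : 2 * lambda ^+ 2 / LX2 * (s0 beta0)%:R =
    4 * lambda ^+ 2 * (s0 beta0)%:R / LX2 / 2 by field; rewrite gt_eqF.
by move: lambda_s0 s0_term compat emp_lo basic supp noise'; lra.
Qed.

End Estimator.

Theorem mainTheorem3 (R : realType) (dm : measure_display)
  (Omega : measurableType dm) (P : probability Omega R) (p d n : nat)
  (x : Omega -> 'rV[R]_p) (z : Omega -> 'rV[R]_d)
  (h : 'rV[R]_d -> 'rV[R]_p) (LX2 : R)
  (G : set ('rV[R]_d -> R))
  (J : ('rV[R]_d -> R) -> ('rV[R]_d -> R) -> R)
  (beta0 : 'cV[R]_p) (g0 : 'rV[R]_d -> R)
  (X : 'M[R]_(n, p)) (Zs : 'I_n -> 'rV[R]_d) (E : 'cV[R]_n)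
  (delta0 lambda mu Rr : R)
  (betahat : 'cV[R]_p) (ghat : 'rV[R]_d -> R) :
  (0 < n)%N ->
  (forall j : 'I_p, sq_int P (fun w => x w 0 j)) ->
  cond_exp P x z h ->
  semi_inner_subspace P z G J ->
  G g0 ->
  0 < delta0 -> delta0 <= 1 / 253%:R ->
  0 < lambda -> 0 < mu -> 0 < Rr ->
  condC3 P x z h LX2 ->
  mu ^+ 2 * (2 * J g0 g0) <= delta0 * Rr ^+ 2 ->
  4 * lambda ^+ 2 * (s0 beta0)%:R / LX2 <= delta0 * Rr ^+ 2 ->
  in_T P x z X Zs E G J delta0 lambda mu Rr ->
  is_minimizer X Zs E G J beta0 g0 lambda mu betahat ghat ->
  tau P x z J delta0 lambda mu Rr (betahat - beta0) (fun v => ghat v - g0 v)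
    <= Rr.
Proof.
move=> _ x2 hE GJ Gg0 d0 d1 l0 _ R0 C3 J_g0 l_s0 inT minz.
have half := rescaled_tau_le_half x2 hE GJ Gg0 d0 d1 l0 R0 C3 J_g0 l_s0 inT minz.
have G_err := G_error GJ Gg0 minz.
set T := tau _ _ _ _ _ _ _ _ _ _.
have T_ge0 : 0 <= T by apply: tau_ge0; exact: ltW.
pose t := Rr / (Rr + T).
have t_gt0 : 0 < t by rewrite divr_gt0 // ltr_wpDr.
have t_le1 : t <= 1 by rewrite ler_pdivrMr ?mul1r ?lerDl // ltr_wpDr.
have tauZt := tauZ x2 GJ delta0 lambda mu Rr (betahat - beta0) (ltW t_gt0) G_err.
apply: (le_of_rescaled_le_half R0 T_ge0); rewrite -/t -tauZt.
apply: half => //; rewrite tauZt mulrAC ler_pdivrMr ?ltr_wpDr // ler_pM2l // lerDr.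
exact: ltW.
Qed.
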